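(* Let $\{\mathbf{x}_i\}_{i=1}^N\subset\mathbb{R}^{D_x}$ and $\{\mathbf{y}_i\}_{i=1}^N\subset\mathbb{R}^{D_y}$ be zero-mean data, $\mathbf{X}=[\mathbf{x}_1\,\cdots\,\mathbf{x}_N]$, $\mathbf{Y}=[\mathbf{y}_1\,\cdots\,\mathbf{y}_N]$, $\boldsymbol{\Sigma}_x=\frac1N\sum_i\mathbf{x}_i\mathbf{x}_i^\top$, $\boldsymbol{\Sigma}_y=\frac1N\sum_i\mathbf{y}_i\mathbf{y}_i^\top$, $\boldsymbol{\Sigma}_{xy}=\frac1N\sum_i\mathbf{x}_i\mathbf{y}_i^\top$. Let $\mathbf{W}=(w_{ij})\in\mathbb{R}^{N\times N}$ be a symmetric matrix with nonnegative entries, $d_i=\sum_{j=1}^N w_{ij}$, $d_{\max}=\max_i d_i$, $\mathbf{D}=\mathrm{diag}(d_1,\dots,d_N)$, $\mathbf{L}_{\mathcal{G}}=\mathbf{D}-\mathbf{W}$, and let $\gamma\ge 0$. Define $$f(\mathbf{u},\mathbf{v})=\mathbf{u}^\top\boldsymbol{\Sigma}_{xy}\mathbf{v}-\gamma\mathbf{u}^\top\mathbf{X}\mathbf{L}_{\mathcal{G}}\mathbf{Y}^\top\mathbf{v}-\frac{\gamma}{2}\sum_{i=1}^N d_i(\mathbf{u}^\top\mathbf{x}_i-\mathbf{v}^\top\mathbf{y}_i)^2,$$ and let $g(\mathbf{u},\mathbf{v})$ be obtained from $f$ by replacing $\sum_{i=1}^N d_i(\mathbf{u}^\top\mathbf{x}_i-\mathbf{v}^\top\mathbf{y}_i)^2$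 with $2d_{\max}N(\mathbf{u}^\top\boldsymbol{\Sigma}_x\mathbf{u}+\mathbf{v}^\top\boldsymbol{\Sigma}_y\mathbf{v})$. Then $g(\mathbf{u},\mathbf{v})\le f(\mathbf{u},\mathbf{v})$ for all $\mathbf{u}\in\mathbb{R}^{D_x},\mathbf{v}\in\mathbb{R}^{D_y}$, and on the set $\{\mathbf{u}^\top\boldsymbol{\Sigma}_x\mathbf{u}=1,\ \mathbf{v}^\top\boldsymbol{\Sigma}_y\mathbf{v}=1\}$, $g$ differs from $\mathbf{u}^\top\boldsymbol{\Sigma}_{xy}\mathbf{v}-\gamma\mathbf{u}^\top\mathbf{X}\mathbf{L}_{\mathcal{G}}\mathbf{Y}^\top\mathbf{v}$ only by a constant; hence maximizing $g$ subject to these constraints is equivalent to the problem $$\max_{\mathbf{u},\mathbf{v}}\ \mathbf{u}^\top\boldsymbol{\Sigma}_{xy}\mathbf{v}-\gamma\mathbf{u}^\top\mathbf{X}\mathbf{L}_{\mathcal{G}}\mathbf{Y}^\top\mathbf{v}\quad\text{s.t.}\quad \mathbf{u}^\top\boldsymbol{\Sigma}_x\mathbf{u}=1,\ \mathbf{v}^\top\boldsymbol{\Sigma}_y\mathbf{v}=1.$$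
   Context: $\mathbf{W}$ is the weighted adjacency matrix of an undirected graph $\mathcal{G}$ on $N$ nodes (the common-source graph), and $\mathbf{L}_{\mathcal{G}}$ is its Laplacian. The last displayed problem is called graph CCA (gCCA). *)

From HB Require Import structures.
From mathcomp Require Import all_boot all_order all_algebra.
Set Implicit Arguments. Unset Strict Implicit. Unset Printing Implicit Defensive.
Import Order.TTheory GRing.Theory Num.Theory.
Local Open Scope ring_scope.

Section GCCA.
Variable R : realFieldType.

Definition bform (m n : nat) (u : 'cV[R]_m) (M : 'M[R]_(m, n)) (v : 'cV[R]_n) : R :=
  (u^T *m M *m v) 0 0.

Definition ip (m : nat) (u x : 'cV[R]_m) : R := (u^T *m x) 0 0.

Definition Sigma (Dx Dy N : nat) (X : 'M[R]_(Dx, N)) (Y : 'M[R]_(Dy, N)) : 'M[R]_(Dx, Dy) :=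
  (N%:R)^-1 *: \sum_(i < N) (col i X *m (col i Y)^T).

Definition deg (N : nat) (W : 'M[R]_N) (i : 'I_N) : R := \sum_(j < N) W i j.

(* d_max = max_i d_i (degrees are nonnegative, so 0 is a neutral start) *)
Definition dmax (N : nat) (W : 'M[R]_N) : R := \big[Num.max/0]_(i < N) deg W i.

Definition laplacian (N : nat) (W : 'M[R]_N) : 'M[R]_N :=
  diag_mx (\row_i deg W i) - W.

Definition gcca_obj (Dx Dy N : nat) (X : 'M[R]_(Dx, N)) (Y : 'M[R]_(Dy, N))
  (W : 'M[R]_N) (gamma : R) (u : 'cV[R]_Dx) (v : 'cV[R]_Dy) : R :=
  bform u (Sigma X Y) v - gamma * bform u (X *m laplacian W *m Y^T) v.

Definition f_obj (Dx Dy N : nat) (X : 'M[R]_(Dx, N)) (Y : 'M[R]_(Dy, N))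
  (W : 'M[R]_N) (gamma : R) (u : 'cV[R]_Dx) (v : 'cV[R]_Dy) : R :=
  gcca_obj X Y W gamma u v
  - gamma / 2%:R * \sum_(i < N) deg W i * (ip u (col i X) - ip v (col i Y)) ^+ 2.

Definition g_obj (Dx Dy N : nat) (X : 'M[R]_(Dx, N)) (Y : 'M[R]_(Dy, N))
  (W : 'M[R]_N) (gamma : R) (u : 'cV[R]_Dx) (v : 'cV[R]_Dy) : R :=
  gcca_obj X Y W gamma u v
  - gamma / 2%:R * (2%:R * dmax W * N%:R * (bform u (Sigma X X) u + bform v (Sigma Y Y) v)).

Definition constr (Dx Dy N : nat) (X : 'M[R]_(Dx, N)) (Y : 'M[R]_(Dy, N))
  (u : 'cV[R]_Dx) (v : 'cV[R]_Dy) : Prop :=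
  bform u (Sigma X X) u = 1 /\ bform v (Sigma Y Y) v = 1.

End GCCA.

From HB Require Import structures.
From mathcomp Require Import all_boot all_order all_algebra.
From mathcomp Require Import lra.
Set Implicit Arguments. Unset Strict Implicit. Unset Printing Implicit Defensive.
Import Order.TTheory GRing.Theory Num.Theory.
Local Open Scope ring_scope.

(* Expanding the covariances, N u^T Sx u = sum_i (u^T x_i)^2, so the penalty of
   g is 2 d_max sum_i ((u^T x_i)^2 + (v^T y_i)^2).  Termwise, d_i <= d_max and
   (a - b)^2 <= 2 (a^2 + b^2), which gives g <= f.  On the constraint set the
   penalty of g is the constant 2 d_max N, so g and the gCCA objective differ by
   a constant there and have the same maximizers. *)

Lemma sqrrB_le_mul2_sqrD (R : realDomainType) (a b : R) :
  (a - b) ^+ 2 <= 2%:R * (a ^+ 2 + b ^+ 2).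
Proof. by have := sqr_ge0 (a + b); rewrite !expr2; lra. Qed.

Lemma weighted_sqrB_le (R : realDomainType) (N : nat) (d : 'I_N -> R) (dm : R)
    (a b : 'I_N -> R) :
  (forall i, 0 <= d i <= dm) ->
  \sum_(i < N) d i * (a i - b i) ^+ 2
    <= 2%:R * dm * (\sum_(i < N) a i ^+ 2 + \sum_(i < N) b i ^+ 2).
Proof.
move=> d_bounds; rewrite -big_split mulr_sumr; apply: ler_sum => i _ /=.
have /andP[d_ge0 d_le] := d_bounds i.
apply: (le_trans (ler_wpM2l d_ge0 (sqrrB_le_mul2_sqrD (a i) (b i)))).
rewrite mulrCA -mulrA; apply: ler_wpM2l; first by rewrite ler0n.
by apply: ler_wpM2r => //; rewrite addr_ge0 ?sqr_ge0.
Qed.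

Section Covariance.
Variable R : realFieldType.

Lemma bform_Sigma_sum_sqr (D N : nat) (X : 'M[R]_(D, N)) (u : 'cV[R]_D) :
  N%:R * bform u (Sigma X X) u = \sum_(i < N) ip u (col i X) ^+ 2.
Proof.
case: N X => [|n] X; first by rewrite mul0r big_ord0.
rewrite /bform /Sigma -!mulmxA -scalemxAl -scalemxAr mxE mulrA.
rewrite mulfV ?pnatr_eq0 // mul1r mulmx_suml mulmx_sumr summxE.
apply: eq_bigr => i _.
rewrite !mulmxA -mulmxA -[_^T *m u]trmxK trmx_mul trmxK mxE big_ord1 [X in _ * X]mxE.
by rewrite /ip expr2.
Qed.

Lemma deg_ge0 (N : nat) (W : 'M[R]_N) (i : 'I_N) :
  (forall i j, 0 <= W i j) -> 0 <= deg W i.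
Proof. by move=> W_ge0; apply: sumr_ge0 => j _. Qed.

Lemma deg_le_dmax (N : nat) (W : 'M[R]_N) (i : 'I_N) : deg W i <= dmax W.
Proof. exact: le_bigmax. Qed.

Variables (Dx Dy N : nat) (X : 'M[R]_(Dx, N)) (Y : 'M[R]_(Dy, N)) (W : 'M[R]_N).
Variable gamma : R.

Lemma g_obj_le_f_obj u v :
  (forall i j, 0 <= W i j) -> 0 <= gamma ->
  g_obj X Y W gamma u v <= f_obj X Y W gamma u v.
Proof.
move=> W_ge0 gamma_ge0; rewrite /g_obj /f_obj lerD2l lerN2.
apply: ler_wpM2l; first by rewrite divr_ge0 ?ler0n.
rewrite -mulrA mulrDr !bform_Sigma_sum_sqr.
by apply: weighted_sqrB_le => i; rewrite deg_ge0 ?deg_le_dmax.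
Qed.

Lemma g_obj_constr u v : constr X Y u v ->
  g_obj X Y W gamma u v
    = gcca_obj X Y W gamma u v - gamma / 2%:R * (2%:R * dmax W * N%:R * 2%:R).
Proof. by case=> hu hv; rewrite /g_obj hu hv. Qed.

End Covariance.

Lemma argmax2_addr (T U : Type) (R : numDomainType) (S : T -> U -> Prop)
    (f g : T -> U -> R) (c : R) (x : T) (y : U) :
  (forall x' y', S x' y' -> f x' y' = g x' y' + c) -> S x y ->
  (forall x' y', S x' y' -> f x' y' <= f x y)
    <-> (forall x' y', S x' y' -> g x' y' <= g x y).
Proof.
move=> fE Sxy; split=> max_xy x' y' Sxy'.
- by have := max_xy x' y' Sxy'; rewrite !fE // lerD2r.
- by rewrite !fE // lerD2r; exact: max_xy.
Qed.

Theorem proposition1 (R : realFieldType) (Dx Dy N : nat)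
  (X : 'M[R]_(Dx, N)) (Y : 'M[R]_(Dy, N)) (W : 'M[R]_N) (gamma : R)
  (hX0 : \sum_(i < N) col i X = 0) (hY0 : \sum_(i < N) col i Y = 0)
  (hWsym : W^T = W) (hWnn : forall i j, 0 <= W i j) (hgamma : 0 <= gamma) :
  (forall u v, g_obj X Y W gamma u v <= f_obj X Y W gamma u v)
  /\ (exists c : R, forall u v, constr X Y u v ->
        g_obj X Y W gamma u v = gcca_obj X Y W gamma u v + c)
  /\ (forall u v, constr X Y u v ->
        ((forall u' v', constr X Y u' v' -> g_obj X Y W gamma u' v' <= g_obj X Y W gamma u v)
         <-> (forall u' v', constr X Y u' v' ->
                gcca_obj X Y W gamma u' v' <= gcca_obj X Y W gamma u v))).
Proof.
split; first by move=> u v; exact: g_obj_le_f_obj.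
split; first by eexists; exact: g_obj_constr.
by move=> u v; apply: argmax2_addr; exact: g_obj_constr.
Qed.
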